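(* Let $\mathcal{G}=\langle S,A,T,s_0,F\rangle$ be a two-player turn-based deterministic reachability game and let $Y\subseteq \mathrm{Win}_2(\mathcal{G},F)\setminus F$. Let $\mathcal{G}_{\emptyset,Y}=\langle S,A,T_{\emptyset,Y},s_0,F\cup Y\rangle$ be the game in which $T_{\emptyset,Y}(s,a)=T(s,a)$ if $s\notin Y$ and $T_{\emptyset,Y}(s,a)=s$ if $s\in Y$, and whose goal set (for P2) is $F\cup Y$. Then for every state $s\in\mathrm{Win}_2(\mathcal{G},F)$, the rank of $s$ in $\mathcal{G}_{\emptyset,Y}$ (with respect to the target $F\cup Y$) is less than or equal to its rank in $\mathcal{G}$ (with respect to the target $F$).
   Context: A two-player turn-based deterministic reachability game is a tuple $\mathcal{G}=\langle S,A,T,s_0,F\rangle$ where $S$ is a finite set of states partitioned into P1 states $S_1$ and P2 states $S_2$; $A=A_1\cup A_2$ with $A_1$ the actions of P1 and $A_2$ the actions of P2; $T:(S_1\times A_1)\cup(S_2\times A_2)\to S$ is a deterministic (possibly partial) transition function, an action $a$ being enabled at $s$ if $T(s,a)$ is defined, and every state has at least one enabled action; $s_0\in S$ is an initial state; $F\subseteq S$ is a set of sink states (P2's goal). For a game with transition function $\tau$ and a target set $R\subseteq S$, define level sets $Z_0=R$ and $Z_{k+1}=Z_k\cup\{s\in S_1:\tau(s,a)\in Z_k\text{ for every }a\text{ enabled at }s\}\cup\{s\in S_2:\tau(s,a)\in Z_k\text{ for some enabled }a\}$. P2's winning region is $\bigcup_k Z_k$ (the set of states from which P2 can force a visit to $R$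 in finitely many steps); for $\mathcal{G}$ with target $F$ this is denoted $\mathrm{Win}_2(\mathcal{G},F)$. The rank of a state $s$ is $\min\{k:s\in Z_k\}$ (and $\infty$ if $s$ lies in no $Z_k$), i.e., the minimum number of steps within which P2 can guarantee a visit to the target regardless of P1's play. *)

From mathcomp Require Import all_boot.
From Stdlib Require Import ClassicalEpsilon.
Set Implicit Arguments. Unset Strict Implicit. Unset Printing Implicit Defensive.

(* A two-player turn-based deterministic reachability game over a finite
   state type S and finite action type A.  [P1 s] means s is a P1 state
   (s in S_1), otherwise s in S_2; [A1 a] means a is a P1 action (a in A_1),
   otherwise a in A_2.  [T s a = None] means a is not enabled at s. *)
Section Games.
Variables (S A : finType).

Definition enabled (T : S -> A -> option S) (s : S) (a : A) : bool :=
  T s a != None.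

Definition wf_game (P1 : pred S) (A1 : pred A) (T : S -> A -> option S)
    (F : {set S}) : Prop :=
  (forall s a, enabled T s a -> P1 s = A1 a) /\
  (forall s, exists a, enabled T s a) /\
  (forall s a t, s \in F -> T s a = Some t -> t = s).

Definition attr_step (P1 : pred S) (tau : S -> A -> option S) (Z : {set S})
    : {set S} :=
  Z :|: [set s | P1 s && [forall a, oapp (fun t => t \in Z) true (tau s a)]]
    :|: [set s | ~~ P1 s && [exists a, oapp (fun t => t \in Z) false (tau s a)]].

Fixpoint level (P1 : pred S) (tau : S -> A -> option S) (R : {set S}) (k : nat)
    : {set S} :=
  match k with
  | 0 => R
  | k'.+1 => attr_step P1 tau (level P1 tau R k')
  end.

Definition Win2 (P1 : pred S) (tau : S -> A -> option S) (R : {set S}) (s : S)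
    : Prop := exists k, s \in level P1 tau R k.

(* rank: min {k | s in Z_k}, None encodes infinity *)
Definition rank (P1 : pred S) (tau : S -> A -> option S) (R : {set S}) (s : S)
    : option nat :=
  match excluded_middle_informative
          (exists k, (fun k => s \in level P1 tau R k) k) with
  | left h => Some (ex_minn h)
  | right _ => None
  end.

Definition rank_le (x y : option nat) : Prop :=
  match x, y with
  | _, None => True
  | None, Some _ => False
  | Some m, Some n => m <= n
  end.

Definition T_restrict (T : S -> A -> option S) (Y : {set S}) (s : S) (a : A)
    : option S :=
  if s \in Y then omap (fun _ => s) (T s a) else T s a.

End Games.

From mathcomp Require Import all_boot.
From Stdlib Require Import ClassicalEpsilon.

(* Redirecting the states of Y to themselves only changes transitions out of
   states that already belong to the enlarged target F :|: Y, and enlarging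
   the target can only enlarge every level set.  So each level Z_k of the
   original game is contained in the level Z_k of the modified one, and the
   least k with s in Z_k can only decrease. *)

Section LevelComparison.
Variables (S A : finType) (P1 : pred S).
Implicit Types (tau : S -> A -> option S) (R Z : {set S}).

Lemma sub_level tau R k : R \subset level P1 tau R k.
Proof.
elim: k => [|k IH] //=; apply: subset_trans IH _.
by apply/subsetP => s sZ; rewrite /attr_step !inE sZ.
Qed.

Lemma attr_step_sub tau tau' Z Z' :
    Z \subset Z' -> (forall s, s \notin Z' -> tau' s =1 tau s) ->
  attr_step P1 tau Z \subset attr_step P1 tau' Z'.
Proof.
move=> /subsetP sZZ' eq_tau; apply/subsetP => s.
case: (boolP (s \in Z')) => [sZ' _ | nsZ']; first by rewrite /attr_step !inE sZ'.
have succ_sub a b : oapp (mem Z) b (tau s a) -> oapp (mem Z') b (tau' s a).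
  by rewrite eq_tau //; case: (tau s a) => //= t /sZZ'.
rewrite /attr_step !inE => /orP[/orP[/sZZ' -> // | /andP[-> /forallP all_in]] |
                                 /andP[-> /existsP[a some_in]]].
  by apply/orP; left; apply/orP; right; apply/forallP => a; apply: succ_sub.
by apply/orP; right; apply/existsP; exists a; apply: succ_sub.
Qed.

Lemma level_sub tau tau' R R' k :
    R \subset R' -> (forall s, s \notin R' -> tau' s =1 tau s) ->
  level P1 tau R k \subset level P1 tau' R' k.
Proof.
move=> sRR' eq_tau; elim: k => [|k IH] //=; apply: attr_step_sub => // s ns.
by apply: eq_tau; apply: contra ns; apply/subsetP: s; apply: sub_level.
Qed.

Lemma rank_le_level_sub tau tau' R R' s :
    (forall k, level P1 tau R k \subset level P1 tau' R' k) ->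
  rank_le (rank P1 tau' R' s) (rank P1 tau R s).
Proof.
move=> sub; rewrite /rank.
case: excluded_middle_informative => [win' | lose']; last first.
  case: excluded_middle_informative => // -[k sk].
  by case: lose'; exists k; apply/subsetP: sk.
case: excluded_middle_informative => // win.
case: ex_minnP => n _ min_n; case: ex_minnP => m sm _.
by apply: min_n; apply/subsetP: sm.
Qed.

End LevelComparison.

Lemma T_restrict_out (S A : finType) (T : S -> A -> option S) (Y : {set S}) s :
  s \notin Y -> T_restrict T Y s =1 T s.
Proof. by move=> nsY a; rewrite /T_restrict (negbTE nsY). Qed.

Theorem lemma1 (S A : finType) (P1 : pred S) (A1 : pred A)
    (T : S -> A -> option S) (s0 : S) (F : {set S}) (Y : {set S}) :
  wf_game P1 A1 T F ->
  (forall y, y \in Y -> Win2 P1 T F y /\ y \notin F) ->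
  forall s, Win2 P1 T F s ->
    rank_le (rank P1 (T_restrict T Y) (F :|: Y) s) (rank P1 T F s).
Proof.
move=> _ _ s _; apply: rank_le_level_sub => k.
apply: level_sub; first exact: subsetUl.
by move=> t; rewrite inE negb_or => /andP[_ ntY]; apply: T_restrict_out.
Qed.
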